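(* If $X\subset\mathbb{R}^2$ is a planar self-affine set satisfying the strong separation condition, then $$\sup_{x\in X,\ V\in\mathbb{RP}^1}\dim_H\big(X\cap(V+x)\big)<1.$$
   Context: An affine iterated function system is a tuple $(\varphi_1,\dots,\varphi_N)$, $N\ge2$, with $\varphi_i(x)=A_ix+v_i$, $A_i\in GL_2(\mathbb{R})$, $\|A_i\|<1$; its self-affine set $X$ is the unique nonempty compact set with $X=\bigcup_i\varphi_i(X)$. Strong separation condition: $\varphi_i(X)\cap\varphi_j(X)=\emptyset$ for $i\ne j$. $\mathbb{RP}^1$ is the set of lines through the origin; $V+x$ is the translate of $V$ by $x$; $\dim_H$ is Hausdorff dimension. *)

From HB Require Import structures.
From mathcomp Require Import all_boot all_order all_algebra.
From mathcomp Require Import all_classical all_reals all_analysis.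
Set Implicit Arguments. Unset Strict Implicit. Unset Printing Implicit Defensive.
Import Order.TTheory GRing.Theory Num.Theory.
Import numFieldNormedType.Exports.
Local Open Scope classical_set_scope.
Local Open Scope ring_scope.

Definition enorm (R : realType) (p : 'cV[R]_2) : R :=
  Num.sqrt (\sum_(i < 2) (p i 0) ^+ 2).
Definition edist (R : realType) (p q : 'cV[R]_2) : R := enorm (p - q).

Definition opnorm (R : realType) (A : 'M[R]_2) : R :=
  sup [set enorm (A *m x) | x in [set x : 'cV[R]_2 | enorm x = 1]].

Definition diam (R : realType) (U : set 'cV[R]_2) : R :=
  sup [set edist p q | p in U & q in U].

(* s-cost of a countable cover, with the convention diam(empty)^s = 0. *)
Definition cover_cost (R : realType) (s : R) (U : nat -> set 'cV[R]_2) : \bar R :=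
  (\sum_(0 <= n <oo) (if pselect (U n = set0) then 0 else diam (U n) `^ s)%:E)%E.

Definition delta_cover (R : realType) (delta : R) (A : set 'cV[R]_2)
    (U : nat -> set 'cV[R]_2) : Prop :=
  A `<=` \bigcup_n U n /\
  forall n p q, U n p -> U n q -> edist p q <= delta.

Definition hausdorff_delta (R : realType) (s delta : R) (A : set 'cV[R]_2) : \bar R :=
  ereal_inf [set cover_cost s U | U in delta_cover delta A].

Definition hausdorff_measure (R : realType) (s : R) (A : set 'cV[R]_2) : \bar R :=
  ereal_sup [set hausdorff_delta s delta A | delta in [set d : R | 0 < d]].

Definition dimH (R : realType) (A : set 'cV[R]_2) : \bar R :=
  ereal_inf [set s%:E | s in [set s : R | 0 <= s /\ hausdorff_measure s A = 0%E]].

Definition affine_map (R : realType) (A : 'M[R]_2) (v : 'cV[R]_2) (x : 'cV[R]_2)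
  : 'cV[R]_2 := A *m x + v.

(* The line through the origin spanned by u (an element of RP^1 when u != 0). *)
Definition line_through0 (R : realType) (u : 'cV[R]_2) : set 'cV[R]_2 :=
  [set t *: u | t in [set: R]].

Definition translate (R : realType) (V : set 'cV[R]_2) (x : 'cV[R]_2) : set 'cV[R]_2 :=
  [set y + x | y in V].

(* Let X be the attractor of an affine IFS (phi_i)_i with invertible linear
   parts of operator norm <= lam < 1 whose pieces phi_i(X) are pairwise
   disjoint.  By compactness X has a diameter bound D and the pieces are at
   mutual distance >= dl > 0.  Put s = D / (D + dl) < 1.

   Key fact: every nonempty set Q contained in X and in a line admits, for
   each n, a finite cover by subsets of diameter <= lam^n D whose s-cost
   (sum of diam^s) is at most diam(Q)^s.  This is proved by induction on n,
   and within each step by induction on diam(Q)/dl: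
   - if Q lies in a single piece phi_i(X), pull it back by phi_i (again a
     slice of X along a line), cover it at level n and push forward; the
     affine map scales distances on a line by a factor <= lam;
   - otherwise Q straddles the gap between a piece and its complement, so it
     splits into two slices Ql, Qr with diam Ql + diam Qr + dl <= diam Q;
     the concavity inequality a^s + b^s <= (a + b + dl)^s (valid as
     a + b + dl <= D) lets us concatenate covers of Ql and Qr.
   Such covers force the s'-dimensional Hausdorff measure of Q to vanish for
   every s' > s, hence dim_H Q <= (1 + s)/2 < 1 uniformly over all slices. *)

From Pilot Require Import Defs.
From HB Require Import structures.
From mathcomp Require Import all_boot all_order all_algebra.
From mathcomp Require Import all_classical all_reals all_analysis.
From mathcomp Require Import ring lra.
Import Order.TTheory GRing.Theory Num.Theory.
Import numFieldNormedType.Exports.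
Local Open Scope classical_set_scope.
Local Open Scope ring_scope.
Set Implicit Arguments. Unset Strict Implicit. Unset Printing Implicit Defensive.

(* mathcomp-analysis also defines an [edist]; we always mean the Euclidean one. *)
Notation edist := Defs.edist.

Section Euclid.
Variable R : realType.
Implicit Types p q u : 'cV[R]_2.

Lemma sum2 (F : 'I_2 -> R) : \sum_(i < 2) F i = F ord0 + F (lift ord0 ord0).
Proof. by rewrite big_ord_recl big_ord1. Qed.

Lemma enorm_ge0 p : 0 <= enorm p.
Proof. exact: sqrtr_ge0. Qed.

Lemma sumsq_ge0 p : 0 <= \sum_(i < 2) p i 0 ^+ 2.
Proof. by apply: sumr_ge0 => i _; rewrite sqr_ge0. Qed.

Lemma enormZ (t : R) p : enorm (t *: p) = `|t| * enorm p.
Proof.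
rewrite /enorm.
have -> : \sum_(i < 2) (t *: p) i 0 ^+ 2 = t ^+ 2 * \sum_(i < 2) p i 0 ^+ 2.
  by rewrite mulr_sumr; apply: eq_bigr => i _; rewrite mxE exprMn.
by rewrite sqrtrM ?sqr_ge0 // sqrtr_sqr.
Qed.

Lemma enorm0 : enorm (0 : 'cV[R]_2) = 0.
Proof. by have := enormZ 0 (0 : 'cV[R]_2); rewrite scale0r normr0 mul0r. Qed.

Lemma enorm_eq0 p : enorm p = 0 -> p = 0.
Proof.
rewrite /enorm => /eqP; rewrite sqrtr_eq0 => H.
have /eqP : \sum_(i < 2) p i 0 ^+ 2 = 0 by apply/eqP; rewrite eq_le H sumsq_ge0.
rewrite sum2 paddr_eq0 ?sqr_ge0 // !sqrf_eq0 => /andP[/eqP h0 /eqP h1].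
apply/matrixP => i j; rewrite (ord1 j) mxE.
by case: i => [[|[|k]] Hk] //=; [rewrite -h0 | rewrite -h1]; congr (p _ _); apply: val_inj.
Qed.

Lemma enorm_gt0 p : p != 0 -> 0 < enorm p.
Proof.
move=> p0; rewrite lt_neqAle enorm_ge0 andbT eq_sym.
by apply/eqP => /enorm_eq0 /eqP; rewrite (negbTE p0).
Qed.

Lemma edist_ge0 p q : 0 <= edist p q.
Proof. exact: enorm_ge0. Qed.

Lemma edistxx p : edist p p = 0.
Proof. by rewrite /edist subrr enorm0. Qed.

Lemma edist_eq0 p q : edist p q = 0 -> p = q.
Proof. by move=> /enorm_eq0 /eqP; rewrite subr_eq0 => /eqP. Qed.

Lemma coord_le_enorm p i : `|p i 0| <= enorm p.
Proof.
rewrite /enorm -sqrtr_sqr ler_sqrt ?sumsq_ge0 //.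
rewrite (bigD1 i) //= lerDl; apply: sumr_ge0 => j _; exact: sqr_ge0.
Qed.

Lemma enorm_le_sum p : enorm p <= \sum_(i < 2) `|p i 0|.
Proof.
rewrite /enorm -(@ger0_norm _ (\sum_(i < 2) `|p i 0|)); last first.
  by apply: sumr_ge0 => i _.
rewrite -sqrtr_sqr ler_sqrt ?sqr_ge0 // !sum2 sqrrD.
rewrite !real_normK ?num_real //.
have := mulr_ge0 (normr_ge0 (p ord0 0)) (normr_ge0 (p (lift ord0 ord0) 0)).
rewrite mulr2n; lra.
Qed.

Lemma edist_line (t t' : R) p u :
  edist (t *: u + p) (t' *: u + p) = `|t - t'| * enorm u.
Proof.
by rewrite /Defs.edist -enormZ; congr enorm; rewrite scalerBl opprD addrACA subrr addr0.
Qed.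

(* A crude entrywise bound, used to show that [opnorm] is a genuine supremum. *)
Lemma mx_apply_bound (A : 'M[R]_2) x :
  enorm (A *m x) <= (\sum_(k < 2) \sum_(j < 2) `|A k j|) * enorm x.
Proof.
apply: (le_trans (enorm_le_sum _)); rewrite mulr_suml; apply: ler_sum => k _.
rewrite mxE mulr_suml; apply: (le_trans (ler_norm_sum _ _ _)); apply: ler_sum => j _.
by rewrite normrM ler_wpM2l // coord_le_enorm.
Qed.

Lemma opnorm_bound (A : 'M[R]_2) x : enorm (A *m x) <= opnorm A * enorm x.
Proof.
pose unit_img := [set enorm (A *m y) | y in [set y : 'cV[R]_2 | enorm y = 1]].
have normalize (y : 'cV[R]_2) : y != 0 -> enorm ((enorm y)^-1 *: y) = 1.
  by move=> y0; rewrite enormZ ger0_norm ?invr_ge0 ?enorm_ge0 // mulVf // gt_eqF ?enorm_gt0.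
have hs : has_sup unit_img.
  have c0 : (const_mx 1 : 'cV[R]_2) != 0.
    by apply/eqP => /matrixP /(_ ord0 ord0); rewrite !mxE; apply/eqP; rewrite oner_eq0.
  split; first by eexists; exists ((enorm (const_mx 1 : 'cV[R]_2))^-1 *: const_mx 1);
    [exact: normalize|].
  exists (\sum_(k < 2) \sum_(j < 2) `|A k j|) => _ [y /= y1 <-].
  by have := mx_apply_bound A y; rewrite y1 mulr1.
have [->|x0] := eqVneq x 0; first by rewrite mulmx0 enorm0 mulr0.
have xe : x = enorm x *: ((enorm x)^-1 *: x).
  by rewrite scalerA mulfV ?gt_eqF ?enorm_gt0 // scale1r.
rewrite {1}xe -scalemxAr enormZ ger0_norm ?enorm_ge0 // mulrC ler_wpM2r ?enorm_ge0 //.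
by apply: sup_upper_bound => //; exists ((enorm x)^-1 *: x) => //; exact: normalize.
Qed.

End Euclid.

Section Diameter.
Variable R : realType.
Implicit Types p q u : 'cV[R]_2.
Implicit Types U V : set 'cV[R]_2.

Definition bnd U (M : R) := forall p q, U p -> U q -> edist p q <= M.

Lemma bnd_sub U V M : U `<=` V -> bnd V M -> bnd U M.
Proof. by move=> UV hb p q Up Uq; apply: hb; apply: UV. Qed.

Lemma diam_has_sup U M : bnd U M -> U !=set0 ->
  has_sup [set edist p q | p in U & q in U].
Proof.
move=> hb [p Up]; split; first by exists (edist p p); exists p => //; exists p.
by exists M => _ [a Ua [b Ub <-]]; apply: hb.
Qed.

Lemma diam_ub U M p q : bnd U M -> U p -> U q -> edist p q <= diam U.
Proof.
move=> hb Up Uq; apply: sup_upper_bound; first by apply: (diam_has_sup hb); exists p.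
by exists p => //; exists q.
Qed.

Lemma diam_le U M : U !=set0 -> bnd U M -> diam U <= M.
Proof.
move=> [p Up] hb; apply: ge_sup; first by exists (edist p p); exists p => //; exists p.
by move=> _ [a Ua [b Ub <-]]; apply: hb.
Qed.

Lemma diam_set0 : diam (set0 : set 'cV[R]_2) = 0.
Proof.
rewrite /diam; have -> : [set edist p q | p in (set0 : set 'cV[R]_2) & q in set0] = set0.
  by apply/seteqP; split => // _ [a []].
by rewrite sup0.
Qed.

Lemma diam_ge0 U M : bnd U M -> 0 <= diam U.
Proof.
move=> hb; have [->|/set0P [p Up]] := eqVneq U set0; first by rewrite diam_set0.
by apply: (le_trans _ (diam_ub hb Up Up)); rewrite edistxx.
Qed.

Lemma diam_le_bnd U M : 0 <= M -> bnd U M -> diam U <= M.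
Proof.
move=> M0 hb; have [->|/set0P U0] := eqVneq U set0; first by rewrite diam_set0.
exact: diam_le.
Qed.

Lemma diam_scale U (f : 'cV[R]_2 -> 'cV[R]_2) (M sg : R) :
  bnd U M -> 0 <= sg ->
  (forall y z, U y -> U z -> edist (f y) (f z) = sg * edist y z) ->
  diam (f @` U) = sg * diam U.
Proof.
move=> hb sg0 hf.
have [->|/set0P [y0 Uy0]] := eqVneq U set0.
  by rewrite image_set0 !diam_set0 mulr0.
have hbf : bnd (f @` U) (sg * M).
  by move=> _ _ [y Uy <-] [z Uz <-]; rewrite hf // ler_wpM2l // hb.
have Uf0 : (f @` U) !=set0 by exists (f y0); exists y0.
apply/eqP; rewrite eq_le; apply/andP; split.
  apply: diam_le => // _ _ [y Uy <-] [z Uz <-].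
  by rewrite hf // ler_wpM2l // (diam_ub hb).
have [->|sgp] := eqVneq sg 0; first by rewrite mul0r (diam_ge0 hbf).
have sg0' : 0 < sg by rewrite lt_neqAle eq_sym sgp.
rewrite -ler_pdivlMl //; apply: diam_le; first by exists y0.
move=> y z Uy Uz; rewrite ler_pdivlMl // -hf //.
by apply: (diam_ub hbf); [exists y|exists z].
Qed.

End Diameter.

Section FineCovers.
Variable R : realType.
Implicit Types Q : set 'cV[R]_2.

Definition fine_cover (s r : R) Q (m : nat) (C : nat -> set 'cV[R]_2) :=
  [/\ forall k, (k < m)%N -> C k `<=` Q,
      Q `<=` (fun z => exists2 k, (k < m)%N & C k z),
      forall k, (k < m)%N -> diam (C k) <= r &
      \sum_(0 <= k < m) diam (C k) `^ s <= diam Q `^ s].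

Lemma fine_cover_trivial (s r : R) Q : diam Q <= r ->
  fine_cover s r Q 1 (fun=> Q).
Proof.
move=> Qr; split=> [k _ //|z Qz|k _ //|]; first by exists 0%N.
by rewrite big_nat1.
Qed.

Lemma fine_cover_le (s r r' : R) Q m C : r <= r' ->
  fine_cover s r Q m C -> fine_cover s r' Q m C.
Proof. by move=> rr' [h1 h2 h3 h4]; split => // k km; apply: le_trans (h3 k km) rr'. Qed.

Lemma fine_cover_cat (s r : R) Q Ql Qr m1 C1 m2 C2 :
  Ql `<=` Q -> Qr `<=` Q -> Q `<=` Ql `|` Qr ->
  fine_cover s r Ql m1 C1 -> fine_cover s r Qr m2 C2 ->
  diam Ql `^ s + diam Qr `^ s <= diam Q `^ s ->
  fine_cover s r Q (m1 + m2) (fun k => if (k < m1)%N then C1 k else C2 (k - m1)%N).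
Proof.
move=> sl sr cQ [s1 c1 d1 sum1] [s2 c2 d2 sum2] hcost.
have right_idx k : (k < m1 + m2)%N -> (k < m1)%N = false -> (k - m1 < m2)%N.
  by move=> km hk; rewrite ltn_subLR // leqNgt hk.
split.
- move=> k km; case: ifP => hk; first exact: subset_trans (s1 _ hk) sl.
  exact: subset_trans (s2 _ (right_idx k km hk)) sr.
- move=> z /cQ [/c1 [k km Ck]|/c2 [k km Ck]].
    by exists k; [exact: ltn_addr | rewrite km].
  by exists (m1 + k)%N; [rewrite ltn_add2l | rewrite ltnNge leq_addr /= addKn].
- move=> k km; case: ifP => hk; first exact: d1.
  exact: d2 (right_idx k km hk).
- rewrite (@big_cat_nat _ _ _ m1) //=; last exact: leq_addr.
  under eq_big_nat => k /andP[_ km] do rewrite km.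
  have -> : \sum_(m1 <= k < m1 + m2)
      diam (if (k < m1)%N then C1 k else C2 (k - m1)%N) `^ s =
      \sum_(0 <= k < m2) diam (C2 k) `^ s.
    rewrite -{1}(add0n m1) big_addn addKn; apply: eq_big_nat => k _.
    by rewrite ltnNge leq_addl /= addnK.
  exact: le_trans (lerD sum1 sum2) hcost.
Qed.

End FineCovers.

Section Concavity.
Variable R : realType.

(* Tangent-line bound for the concave map y |-> y^s at y = 1 (Young). *)
Lemma powR_le_tangent (y s : R) : 0 <= y -> 0 < s < 1 -> y `^ s <= s * y + (1 - s).
Proof.
move=> y0 /andP[s0 s1].
have s1' : 0 < 1 - s by rewrite subr_gt0.
have := @conjugate_powR R (y `^ s) 1 s^-1 (1 - s)^-1 (powR_ge0 _ _) ler01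
  ltac:(by rewrite invr_gt0) ltac:(by rewrite invr_gt0) ltac:(by rewrite !invrK addrC subrK).
by rewrite mulr1 -powRrM mulfV ?gt_eqF // powRr1 // powR1 !invrK mul1r mulrC.
Qed.

Lemma gap_powR_le (a b d D : R) : 0 <= a -> 0 <= b -> 0 < d -> a + b + d <= D ->
  a `^ (D / (D + d)) + b `^ (D / (D + d)) <= (a + b + d) `^ (D / (D + d)).
Proof.
move=> a0 b0 d0 hD.
set M := a + b + d; set s := D / (D + d).
have M0 : 0 < M by rewrite /M; lra.
have D0 : 0 < D by apply: lt_le_trans hD.
have Dd0 : 0 < D + d by rewrite addr_gt0.
have s01 : 0 < s < 1 by rewrite divr_gt0 //= ltr_pdivrMr // mul1r ltrDl.
have scaled x : 0 <= x -> x `^ s = (x / M) `^ s * M `^ s.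
  by move=> x0; rewrite -powRM ?divr_ge0 ?(ltW M0) // mulfVK ?gt_eqF.
rewrite (scaled a a0) (scaled b b0) -mulrDl -[X in _ <= X]mul1r ler_wpM2r ?powR_ge0 //.
apply: (le_trans (lerD (powR_le_tangent (divr_ge0 a0 (ltW M0)) s01)
                       (powR_le_tangent (divr_ge0 b0 (ltW M0)) s01))).
have -> : s * (a / M) + (1 - s) + (s * (b / M) + (1 - s)) = 2 - s - s * d / M.
  by rewrite /M; field; rewrite gt_eqF.
have gap : (1 - s) * D = s * d by rewrite /s; field; rewrite gt_eqF.
have : 1 - s <= s * d / M.
  rewrite ler_pdivlMr // -gap; apply: ler_wpM2l => //.
  by case/andP: s01 => _ /ltW; rewrite subr_ge0.
lra.
Qed.

Lemma exists_pow_small (l eta : R) : 0 <= l < 1 -> 0 < eta ->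
  exists n : nat, l ^+ n <= eta.
Proof.
move=> /andP[l0 l1] e0.
have hl : `|l| < 1 by rewrite ger0_norm.
have [N _ HN] := cvgr0_norm_lt _ (cvg_expr hl) _ e0.
by exists N; have := HN N (leqnn N); rewrite /= normrX ger0_norm // => /ltW.
Qed.

End Concavity.

Section LineSplitting.
Variable R : realType.
Implicit Types p q u : 'cV[R]_2.

Definition Lset p u : set 'cV[R]_2 := translate (line_through0 u) p.

Lemma LsetP p u z : Lset p u z <-> exists t, z = t *: u + p.
Proof.
split; first by move=> [_ [t _ <-] <-]; exists t.
by move=> [t ->]; exists (t *: u) => //; exists t.
Qed.

Lemma absB_le (x y : R) : x <= y -> `|x - y| = y - x.
Proof. by move=> xy; rewrite distrC ger0_norm // subr_ge0. Qed.

Lemma real_gap_cut (T : set R) (P : R -> Prop) (d t1 t2 : R) :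
  0 < d -> T t1 -> P t1 -> T t2 -> ~ P t2 -> t1 < t2 ->
  (forall a b, T a -> T b -> P a -> ~ P b -> d <= `|a - b|) ->
  exists e, t1 <= e /\ e + d <= t2 /\ forall t, T t -> t <= e \/ e + d <= t.
Proof.
move=> d0 Tt1 Pt1 Tt2 nPt2 t12 hsep.
pose E := [set t | T t /\ t1 <= t <= t2 /\ P t].
have E1 : E t1 by split => //; split => //; rewrite lexx ltW.
have hs : has_sup E by split; [exists t1 | exists t2 => t [_ [/andP[_ ->] _]]].
set e := sup E.
have te : t1 <= e by apply: sup_upper_bound.
have beyond t : T t -> ~ P t -> (forall y, E y -> y <= t) -> e + d <= t.
  move=> Tt nPt hb; rewrite -lerBrDr; apply: ge_sup; first by exists t1.
  move=> y Ey; have := hsep y t Ey.1 Tt Ey.2.2 nPt.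
  have := hb y Ey; rewrite lerBrDr => yt.
  by rewrite distrC ger0_norm ?subr_ge0 // lerBrDl addrC.
have h2 : e + d <= t2 by apply: beyond => // y [_ [/andP[_ ->] _]].
exists e; split => //; split => // t Tt.
have [te'|et] := leP t e; first by left.
right; have [tt2|t2t] := leP t t2; last by apply: (le_trans h2); exact: ltW.
apply: beyond => //.
  move=> Pt; have : E t by split => //; split => //; rewrite tt2 andbT (le_trans te) // ltW.
  by move=> /(sup_upper_bound hs); rewrite leNgt et.
by move=> y Ey; apply: (le_trans (sup_upper_bound hs Ey)); exact: ltW.
Qed.

Definition gap_split (Q Ql Qr : set 'cV[R]_2) (dl : R) :=
  [/\ Ql `<=` Q /\ Qr `<=` Q, Ql !=set0, Qr !=set0, Q `<=` Ql `|` Qr &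
    forall a a' b b', Ql a -> Ql a' -> Qr b -> Qr b' ->
      exists c c', [/\ Q c, Q c' & edist a a' + edist b b' + dl <= edist c c']].

Lemma line_gap_split_dir (Q Y : set 'cV[R]_2) p u (t1 t2 dl : R) :
  0 < dl -> u != 0 -> t1 < t2 -> Q `<=` Lset p u ->
  Q (t1 *: u + p) -> Y (t1 *: u + p) -> Q (t2 *: u + p) -> ~ Y (t2 *: u + p) ->
  (forall a b, Q a -> Q b -> Y a -> ~ Y b -> dl <= edist a b) ->
  exists Ql Qr, gap_split Q Ql Qr dl.
Proof.
move=> dl0 u0 t12 QL Q1 Y1 Q2 nY2 hsep.
have en0 := enorm_gt0 u0; set g := dl / enorm u.
have g0 : 0 < g by rewrite divr_gt0.
have [e [te [et2 hTe]]] : exists e, t1 <= e /\ e + g <= t2 /\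
    forall t, Q (t *: u + p) -> t <= e \/ e + g <= t.
  apply: (@real_gap_cut [set t | Q (t *: u + p)] (fun t => Y (t *: u + p))) => //.
  move=> a b Ta Tb Pa nPb; have := hsep _ _ Ta Tb Pa nPb.
  by rewrite edist_line ler_pdivrMr.
pose Ql := [set z | Q z /\ exists t, z = t *: u + p /\ t <= e].
pose Qr := [set z | Q z /\ exists t, z = t *: u + p /\ e + g <= t].
exists Ql, Qr; split.
- by split => z [].
- by exists (t1 *: u + p); split => //; exists t1.
- by exists (t2 *: u + p); split => //; exists t2.
- move=> z Qz; have /LsetP [t zt] := QL _ Qz; move: Qz; rewrite zt => Qz.
  by case: (hTe t Qz) => h; [left|right]; split => //; exists t.
move=> a a' b b' [Qa [ta [ea ha]]] [Qa' [ta' [ea' ha']]] [Qb [tb [eb hb]]] [Qb' [tb' [eb' hb']]].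
subst a a' b b'.
have [tl [Qtl [tll h1]]] : exists tl, Q (tl *: u + p) /\ tl <= e /\ `|ta - ta'| <= e - tl.
  case: (leP ta ta') => h.
    by exists ta; split => //; split => //; rewrite absB_le // lerD2r.
  by exists ta'; split => //; split => //; rewrite distrC absB_le ?lerD2r // ltW.
have [th [Qth [thh h2]]] : exists th, Q (th *: u + p) /\ e + g <= th /\
    `|tb - tb'| <= th - (e + g).
  case: (leP tb tb') => h.
    by exists tb'; split => //; split => //; rewrite absB_le // lerD2l lerN2.
  by exists tb; split => //; split => //; rewrite distrC absB_le ?lerD2l ?lerN2 // ltW.
exists (tl *: u + p), (th *: u + p); split => //.
have -> : dl = g * enorm u by rewrite mulfVK ?gt_eqF.
rewrite !edist_line -!mulrDl ler_wpM2r ?enorm_ge0 // (@absB_le tl th); lra.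
Qed.

Lemma line_gap_split (Q Y : set 'cV[R]_2) p u (dl : R) q1 q2 :
  0 < dl -> u != 0 -> Q `<=` Lset p u ->
  Q q1 -> Y q1 -> Q q2 -> ~ Y q2 ->
  (forall a b, Q a -> Q b -> Y a -> ~ Y b -> dl <= edist a b) ->
  exists Ql Qr, gap_split Q Ql Qr dl.
Proof.
move=> dl0 u0 QL Q1 Y1 Q2 nY2 hsep.
have /LsetP [t1 e1] := QL _ Q1; have /LsetP [t2 e2] := QL _ Q2; subst q1 q2.
have [t12|t21|t12] := ltgtP t1 t2; last by subst t2.
  exact: (line_gap_split_dir dl0 u0 t12 QL Q1 Y1 Q2 nY2 hsep).
have flip t : t *: u + p = (- t) *: (- u) + p by rewrite scalerN scaleNr opprK.
have QL' : Q `<=` Lset p (- u).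
  by move=> z /QL /LsetP [t ->]; apply/LsetP; exists (- t).
rewrite flip in Q1 Y1; rewrite flip in Q2 nY2.
by apply: (line_gap_split_dir dl0 _ _ QL' Q1 Y1 Q2 nY2 hsep); rewrite ?oppr_eq0 ?ltrN2.
Qed.

Lemma gap_split_diam (Q Ql Qr : set 'cV[R]_2) (M dl : R) :
  bnd Q M -> gap_split Q Ql Qr dl -> diam Ql + diam Qr + dl <= diam Q.
Proof.
move=> hb [[sl sr] nl nr _ h].
have h1 a a' : Ql a -> Ql a' -> diam Qr <= diam Q - dl - edist a a'.
  move=> la la'; apply: diam_le => // b b' rb rb'.
  have [c [c' [Qc Qc' hc]]] := h a a' b b' la la' rb rb'.
  have := diam_ub hb Qc Qc'; lra.
have : diam Ql <= diam Q - dl - diam Qr.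
  apply: diam_le => // a a' la la'; have := h1 a a' la la'; lra.
lra.
Qed.

Lemma affine_line_scale (B : 'M[R]_2) (w p' u' y z : 'cV[R]_2) :
  u' != 0 -> Lset p' u' y -> Lset p' u' z ->
  edist (affine_map B w y) (affine_map B w z) =
  (enorm (B *m u') / enorm u') * edist y z.
Proof.
move=> u0 /LsetP [t ->] /LsetP [t' ->].
have en0 : enorm u' != 0 by rewrite gt_eqF ?enorm_gt0.
rewrite edist_line /Defs.edist /affine_map.
have -> : B *m (t *: u' + p') + w - (B *m (t' *: u' + p') + w) = (t - t') *: (B *m u').
  have H (x1 y1 c : 'cV[R]_2) : (x1 + c) - (y1 + c) = x1 - y1.
    by rewrite opprD addrACA subrr addr0.
  by rewrite !mulmxDr -!scalemxAr !H scalerBl.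
by rewrite enormZ; field.
Qed.

End LineSplitting.

Section HausdorffFromCovers.
Variable R : realType.
Implicit Types Q : set 'cV[R]_2.

Lemma cost_term_ge0 (s : R) (U : set 'cV[R]_2) :
  0 <= (if pselect (U = set0) then 0 else diam U `^ s).
Proof. by case: (pselect (U = set0)) => h; rewrite ?powR_ge0. Qed.

Lemma cover_cost_finite (s : R) (m : nat) (C : nat -> set 'cV[R]_2) :
  cover_cost s (fun k => if (k < m)%N then C k else set0) =
  (\sum_(0 <= k < m) (if pselect (C k = set0) then 0 else diam (C k) `^ s))%:E.
Proof.
rewrite /cover_cost (nneseries_split 0 m); last first.
  by move=> k _; rewrite lee_fin cost_term_ge0.
rewrite add0n eseries0 ?adde0; last first.
  move=> k mk _; rewrite ltnNge mk /=.
  by case: (pselect (@set0 'cV[R]_2 = set0)).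
rewrite sumEFin; congr _%:E; apply: eq_big_nat => k /andP[_ km].
by rewrite km.
Qed.

Lemma powR_le_scaled (x r s s' : R) : 0 <= x <= r -> 0 < s' -> s <= s' ->
  x `^ s' <= r `^ (s' - s) * x `^ s.
Proof.
move=> /andP[x0 xr] s'0 ss'.
have -> : x `^ s' = x `^ s * x `^ (s' - s).
  rewrite -powRD; first by rewrite addrC subrK.
  by rewrite addrC subrK (gt_eqF s'0).
rewrite mulrC ler_wpM2r ?powR_ge0 //; apply: ge0_ler_powR; rewrite ?nnegrE //.
  by rewrite subr_ge0.
exact: le_trans xr.
Qed.

Lemma hausdorff_delta_eq0 Q (M s s' delta : R) :
  0 < M -> bnd Q M -> 0 < s -> s < s' -> 0 < delta ->
  (forall r, 0 < r -> exists m C, fine_cover s r Q m C) ->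
  hausdorff_delta s' delta Q = 0%E.
Proof.
move=> M0 QM s0 ss' d0 covers.
have ss'0 : 0 < s' - s by rewrite subr_gt0.
apply/eqP; rewrite eq_le; apply/andP; split; last first.
  apply: le_ereal_inf_tmp => _ [U _ <-]; apply: nneseries_ge0 => k _ _.
  by rewrite lee_fin cost_term_ge0.
apply/lee_addgt0Pr => e e0; rewrite add0e.
have Ms0 : 0 < M `^ s by apply: powR_gt0.
set eta := Order.min delta ((e / M `^ s) `^ (s' - s)^-1).
have eta0 : 0 < eta by rewrite lt_min d0 powR_gt0 // divr_gt0.
have [m [C [hsub hcv hdm hsum]]] := covers eta eta0.
have dC k : (k < m)%N -> 0 <= diam (C k).
  by move=> km; apply: diam_ge0 (bnd_sub (hsub k km) QM).
pose U k := if (k < m)%N then C k else set0.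
have hU : delta_cover delta Q U.
  split=> [z /hcv [k km Ck]|k p q]; first by exists k => //; rewrite /U km.
  rewrite /U; case: ifP => km // Cp Cq.
  apply: le_trans (diam_ub (bnd_sub (hsub k km) QM) Cp Cq) _.
  by apply: le_trans (hdm k km) _; rewrite ge_min lexx.
apply: (@le_trans _ _ (cover_cost s' U)); first by apply: ereal_inf_lbound; exists U.
rewrite cover_cost_finite lee_fin.
apply: (@le_trans _ _ (\sum_(0 <= k < m) eta `^ (s' - s) * diam (C k) `^ s)).
  apply: ler_sum_nat => k /andP[_ km]; case: (pselect (C k = set0)) => Ck0.
    by rewrite mulr_ge0 ?powR_ge0.
  by apply: powR_le_scaled; rewrite ?dC ?hdm ?(lt_trans s0) ?ltW.
rewrite -mulr_sumr; apply: (@le_trans _ _ (eta `^ (s' - s) * M `^ s)).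
  apply: ler_wpM2l; first exact: powR_ge0.
  apply: le_trans hsum _; apply: ge0_ler_powR; rewrite ?nnegrE.
  - exact: ltW s0.
  - exact: diam_ge0 QM.
  - exact: ltW M0.
  - exact: diam_le_bnd (ltW M0) QM.
rewrite -ler_pdivlMr //.
apply: (@le_trans _ _ (((e / M `^ s) `^ (s' - s)^-1) `^ (s' - s))).
  apply: ge0_ler_powR; rewrite ?nnegrE ?powR_ge0 ?(ltW ss'0) ?(ltW eta0) //.
  by rewrite ge_min lexx orbT.
by rewrite -powRrM mulVf ?gt_eqF // powRr1 // divr_ge0 // ltW.
Qed.

Lemma hausdorff_measure_eq0 Q (M s s' : R) :
  0 < M -> bnd Q M -> 0 < s -> s < s' ->
  (forall r, 0 < r -> exists m C, fine_cover s r Q m C) ->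
  hausdorff_measure s' Q = 0%E.
Proof.
move=> M0 QM s0 ss' covers; have Hd := hausdorff_delta_eq0 M0 QM s0 ss' _ covers.
rewrite /hausdorff_measure; apply/eqP; rewrite eq_le; apply/andP; split.
  by apply: ge_ereal_sup => _ [d d0 <-]; rewrite Hd.
by apply: ereal_sup_ubound; exists 1; [exact: ltr01 | exact: Hd ltr01].
Qed.

Lemma dimH_le_null Q (s' : R) :
  0 <= s' -> hausdorff_measure s' Q = 0%E -> (dimH Q <= s'%:E)%E.
Proof. by move=> s'0 H0; apply: ereal_inf_lbound; exists s'. Qed.

End HausdorffFromCovers.

Section ImageCovers.
Variable R : realType.

Lemma fine_cover_image (s r sg M : R) (Q' : set 'cV[R]_2) m C
    (f : 'cV[R]_2 -> 'cV[R]_2) :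
  0 <= sg -> bnd Q' M ->
  (forall y z, Q' y -> Q' z -> edist (f y) (f z) = sg * edist y z) ->
  fine_cover s r Q' m C -> fine_cover s (sg * r) (f @` Q') m (fun k => f @` C k).
Proof.
move=> sg0 QM hf [hsub hcv hdm hsum].
have scaled U : U `<=` Q' -> diam (f @` U) = sg * diam U.
  move=> UQ; apply: (diam_scale (bnd_sub UQ QM) sg0).
  by move=> y z Uy Uz; apply: hf; apply: UQ.
have dC k : (k < m)%N -> 0 <= diam (C k) by move=> km; apply: diam_ge0 (bnd_sub (hsub k km) QM).
split.
- by move=> k km _ [y Cy <-]; exists y => //; apply: hsub Cy.
- by move=> _ [y /hcv [k km Cy] <-]; exists k => //; exists y.
- by move=> k km; rewrite (scaled _ (hsub k km)) ler_wpM2l ?hdm.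
rewrite scaled // powRM ?(diam_ge0 QM) //.
have -> : \sum_(0 <= k < m) diam (f @` C k) `^ s = sg `^ s * \sum_(0 <= k < m) diam (C k) `^ s.
  rewrite mulr_sumr; apply: eq_big_nat => k /andP[_ km].
  by rewrite (scaled _ (hsub k km)) powRM ?dC.
by rewrite ler_wpM2l ?powR_ge0.
Qed.

Lemma affine_preimage_line (B : 'M[R]_2) (w p u : 'cV[R]_2) :
  B \in unitmx -> u != 0 ->
  exists p' u', u' != 0 /\ forall y, Lset p u (affine_map B w y) -> Lset p' u' y.
Proof.
move=> Bu u0; exists (invmx B *m (p - w)), (invmx B *m u); split.
  by apply: contra u0 => /eqP h; apply/eqP; rewrite -(mulKVmx Bu u) h mulmx0.
move=> y /LsetP [t et]; apply/LsetP; exists t.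
have : B *m y = t *: u + p - w by rewrite -et /affine_map addrK.
move=> /(congr1 (mulmx (invmx B))); rewrite mulKmx // => ->.
by rewrite -addrA mulmxDr scalemxAr.
Qed.

End ImageCovers.

Section SliceCovers.
Variables (R : realType) (N : nat) (A : 'I_N -> 'M[R]_2) (v : 'I_N -> 'cV[R]_2)
  (X : set 'cV[R]_2) (lam D dl : R).
Local Notation piece i := (affine_map (A i) (v i) @` X).
Hypotheses (hAu : forall i, A i \in unitmx) (hlam0 : 0 <= lam)
  (hlam : forall i, opnorm (A i) <= lam)
  (hD0 : 0 < D) (hXD : bnd X D) (hdl : 0 < dl)
  (hcov : forall z, X z -> exists i, piece i z)
  (hsep : forall i a b, piece i a -> X b -> ~ piece i b -> dl <= edist a b).

Definition sexp := D / (D + dl).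

Lemma sexp_gt0 : 0 < sexp.
Proof. by rewrite /sexp divr_gt0 // addr_gt0. Qed.

Lemma sexp_lt1 : sexp < 1.
Proof. by rewrite /sexp ltr_pdivrMr ?addr_gt0 // mul1r ltrDl. Qed.

Definition slice_covers (n : nat) := forall p u (Q : set 'cV[R]_2),
  u != 0 -> Q `<=` X -> Q `<=` Lset p u -> Q !=set0 ->
  exists m C, fine_cover sexp (lam ^+ n * D) Q m C.

Lemma diam_sub_X (Q : set 'cV[R]_2) : Q `<=` X -> 0 <= diam Q <= D.
Proof.
move=> QX; have QD := bnd_sub QX hXD.
by rewrite (diam_ge0 QD) (diam_le_bnd (ltW hD0) QD).
Qed.

Lemma slice_covers0 : slice_covers 0.
Proof.
move=> p u Q _ QX _ _; exists 1%N, (fun=> Q); apply: fine_cover_trivial.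
by rewrite expr0 mul1r; case/andP: (diam_sub_X QX).
Qed.

(* A slice inside one piece phi_i(X) is the image of a slice of X, on which
   phi_i contracts distances uniformly by a factor <= lam. *)
Lemma slice_covers_piece n i p u (Q : set 'cV[R]_2) :
  slice_covers n -> u != 0 -> Q `<=` X -> Q `<=` Lset p u -> Q !=set0 ->
  Q `<=` piece i -> exists m C, fine_cover sexp (lam ^+ n.+1 * D) Q m C.
Proof.
move=> hn u0 QX QL [q Qq] Qi; set phi := affine_map (A i) (v i).
pose Q' := [set y | X y /\ Q (phi y)].
have eQ : phi @` Q' = Q.
  apply/seteqP; split=> [_ [y [_ Qy] <-] // | z Qz].
  by have [y Xy ey] := Qi z Qz; exists y => //; split => //; rewrite /phi ey.
have [p' [u' [u'0 Q'L]]] := affine_preimage_line (v i) p (hAu i) u0.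
have {}Q'L : Q' `<=` Lset p' u' by move=> y [_ /QL /Q'L].
have Q'X : Q' `<=` X by move=> y [].
have [y Xy ey] := Qi q Qq.
have [m [C hC]] := hn p' u' Q' u'0 Q'X Q'L (ex_intro _ y (conj Xy (eq_ind_r Q Qq ey))).
set sg := enorm (A i *m u') / enorm u'.
have sg0 : 0 <= sg by rewrite divr_ge0 ?enorm_ge0.
have sgl : sg <= lam.
  rewrite /sg ler_pdivrMr ?enorm_gt0 //; apply: le_trans (opnorm_bound _ _) _.
  by rewrite ler_wpM2r ?enorm_ge0.
have := fine_cover_image sg0 (bnd_sub Q'X hXD)
  (fun y z Qy Qz => affine_line_scale (A i) (v i) u'0 (Q'L y Qy) (Q'L z Qz)) hC.
rewrite eQ => hC'; exists m, (fun k => phi @` C k); apply: fine_cover_le hC'.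
rewrite exprS -mulrA ler_wpM2r // ?mulr_ge0 ?exprn_ge0 ?(ltW hD0) //.
Qed.

Lemma gap_split_cost (Q Ql Qr : set 'cV[R]_2) :
  Q `<=` X -> gap_split Q Ql Qr dl ->
  diam Ql `^ sexp + diam Qr `^ sexp <= diam Q `^ sexp.
Proof.
move=> QX hsplit; have [[sl sr] _ _ _ _] := hsplit.
have hdiam := gap_split_diam (bnd_sub QX hXD) hsplit.
have /andP[dl0 _] := diam_sub_X (subset_trans sl QX).
have /andP[dr0 _] := diam_sub_X (subset_trans sr QX).
have /andP[dQ0 dQD] := diam_sub_X QX.
apply: le_trans (gap_powR_le dl0 dr0 hdl _) _; first exact: le_trans hdiam dQD.
apply: ge0_ler_powR => //; first exact: ltW sexp_gt0.
by rewrite nnegrE !addr_ge0 ?(ltW hdl).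
Qed.

(* Passing from level n to n + 1, by induction on diam(Q) / dl: either Q
   lies in one piece, or it gap-splits into two strictly smaller slices. *)
Lemma slice_covers_step n : slice_covers n -> slice_covers n.+1.
Proof.
move=> hn.
suff H k : forall p u (Q : set 'cV[R]_2), u != 0 -> Q `<=` X ->
    Q `<=` Lset p u -> Q !=set0 -> diam Q < k%:R * dl ->
    exists m C, fine_cover sexp (lam ^+ n.+1 * D) Q m C.
  move=> p u Q u0 QX QL Q0; apply: (H (Num.Def.trunc (diam Q / dl)).+1 p u Q u0 QX QL Q0).
  by rewrite -ltr_pdivrMr // truncnS_gt.
elim: k => [|k IH] p u Q u0 QX QL Q0 hk.
  by have /andP[dQ0 _] := diam_sub_X QX; move: hk; rewrite mul0r ltNge dQ0.
have [q1 Qq1] := Q0; have [i ci] := hcov (QX _ Qq1).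
have [Qi|nQi] := pselect (Q `<=` piece i); first exact: (slice_covers_piece hn u0 QX QL Q0 Qi).
have [q2 [Qq2 nq2]] : exists q2, Q q2 /\ ~ piece i q2.
  by apply: contrapT => hno; apply: nQi => z Qz; apply: contrapT => nz; apply: hno; exists z.
have [Ql [Qr hsplit]] := line_gap_split hdl u0 QL Qq1 ci Qq2 nq2
  (fun a b _ Qb Ya nYb => hsep Ya (QX _ Qb) nYb).
have [[sl sr] nl nr cQ _] := hsplit.
have hdiam := gap_split_diam (bnd_sub QX hXD) hsplit.
have /andP[dl0 _] := diam_sub_X (subset_trans sl QX).
have /andP[dr0 _] := diam_sub_X (subset_trans sr QX).
have hk' : diam Q < k%:R * dl + dl by move: hk; rewrite -addn1 natrD mulrDl mul1r.
have [m1 [C1 h1]] := IH p u Ql u0 (subset_trans sl QX) (subset_trans sl QL) nl ltac:(lra).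
have [m2 [C2 h2]] := IH p u Qr u0 (subset_trans sr QX) (subset_trans sr QL) nr ltac:(lra).
by eexists; eexists; apply: fine_cover_cat h1 h2 (gap_split_cost QX hsplit).
Qed.

Lemma slice_covers_all n : slice_covers n.
Proof. by elim: n => [|n IH]; [exact: slice_covers0 | exact: slice_covers_step]. Qed.

Lemma slice_fine_covers p u (Q : set 'cV[R]_2) :
  lam < 1 -> u != 0 -> Q `<=` X -> Q `<=` Lset p u -> Q !=set0 ->
  forall r, 0 < r -> exists m C, fine_cover sexp r Q m C.
Proof.
move=> lam1 u0 QX QL Q0 r r0.
have [n hn] := exists_pow_small (ltac:(by rewrite hlam0 lam1) : 0 <= lam < 1) (divr_gt0 r0 hD0).
have [m [C hC]] := slice_covers_all n u0 QX QL Q0.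
by exists m, C; apply: fine_cover_le hC; rewrite -ler_pdivlMr.
Qed.

End SliceCovers.

Section Compactness.
Variable R : realType.

Lemma continuous_affine_coord (M : 'M[R]_2) (w : 'cV[R]_2) (i : 'I_2) :
  continuous (fun x : 'cV[R]_2 => (M *m x + w) i 0).
Proof.
have -> : (fun x : 'cV[R]_2 => (M *m x + w) i 0) =
    (fun x => M i ord0 * x ord0 0 + M i (lift ord0 ord0) * x (lift ord0 ord0) 0 + w i 0).
  by apply: funext => x; rewrite !mxE sum2.
move=> x; apply: (continuousD (f := fun y : 'cV[R]_2 => _ + _)); last exact: cst_continuous.
by apply: continuousD; apply: continuousM; (exact: cst_continuous || exact: coord_continuous).
Qed.

Lemma continuous_affine_dist (M1 M2 : 'M[R]_2) (w1 w2 : 'cV[R]_2) :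
  continuous (fun x : 'cV[R]_2 * 'cV[R]_2 =>
    edist (affine_map M1 w1 x.1) (affine_map M2 w2 x.2)).
Proof.
move=> x; rewrite /Defs.edist /enorm.
apply: continuous_comp; last exact: sqrt_continuous.
pose a (k : 'I_2) (y : 'cV[R]_2 * 'cV[R]_2) := (M1 *m y.1 + w1) k 0 - (M2 *m y.2 + w2) k 0.
have -> : (fun y : 'cV[R]_2 * 'cV[R]_2 =>
    \sum_(i < 2) (affine_map M1 w1 y.1 - affine_map M2 w2 y.2) i 0 ^+ 2) =
    (fun y => a ord0 y * a ord0 y + a (lift ord0 ord0) y * a (lift ord0 ord0) y).
  by apply: funext => y; rewrite sum2 !expr2 /a !mxE.
have ca k : {for x, continuous (a k)}.
  apply: continuousB.
    apply: (@continuous_comp _ _ _ fst (fun y : 'cV[R]_2 => (M1 *m y + w1) k 0)).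
      exact: cvg_fst.
    exact: continuous_affine_coord.
  apply: (@continuous_comp _ _ _ snd (fun y : 'cV[R]_2 => (M2 *m y + w2) k 0)).
    exact: cvg_snd.
  exact: continuous_affine_coord.
by apply: continuousD; apply: continuousM.
Qed.

Lemma finite_common_pos (I : finType) (P : I -> R -> Prop) :
  (forall i x y, 0 < y -> y <= x -> P i x -> P i y) ->
  (forall i, exists2 x, 0 < x & P i x) ->
  exists2 x, 0 < x & forall i, P i x.
Proof.
move=> mono H.
suff: forall s : seq I, exists2 x, 0 < x & forall i, i \in s -> P i x.
  by move=> /(_ (enum I)) [x x0 hx]; exists x => // i; apply: hx; rewrite mem_enum.
elim=> [|j s [x x0 hx]]; first by exists 1.
have [y y0 hy] := H j.
have m0 : 0 < Order.min x y by rewrite lt_min x0 y0.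
exists (Order.min x y) => // i; rewrite inE => /orP[/eqP ->|iS].
  by apply: (mono _ y) => //; rewrite ge_min lexx orbT.
by apply: (mono _ x) => //; [rewrite ge_min lexx | apply: hx].
Qed.

Lemma common_ratio (N : nat) (A : 'I_N -> 'M[R]_2) :
  (forall i, opnorm (A i) < 1) ->
  exists lam, [/\ 0 <= lam, lam < 1 & forall i, opnorm (A i) <= lam].
Proof.
move=> h.
have [x x0 hx] : exists2 x : R, 0 < x & forall i, opnorm (A i) <= 1 - x.
  apply: finite_common_pos.
    by move=> i a b b0 ba hb; apply: (le_trans hb); rewrite lerD2l lerN2.
  by move=> i; exists (1 - opnorm (A i)); rewrite ?subr_gt0 // opprB addrC subrK.
exists (Order.max (1 - x) 0); split.
- by rewrite le_max lexx orbT.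
- by rewrite gt_max ltr01 andbT ltrBlDr ltrDl.
- by move=> i; apply: (le_trans (hx i)); rewrite le_max lexx.
Qed.

Variables (N : nat) (A : 'I_N -> 'M[R]_2) (v : 'I_N -> 'cV[R]_2) (X : set 'cV[R]_2).
Local Notation piece i := (affine_map (A i) (v i) @` X).
Hypotheses (X0 : X !=set0) (cX : compact X)
  (hcov : forall z, X z -> exists i, piece i z)
  (hdisj : forall i j, i != j -> piece i `&` piece j = set0).

Lemma affine_dist_min (M1 M2 : 'M[R]_2) (w1 w2 : 'cV[R]_2) :
  exists2 c, (X `*` X) c & forall y z, X y -> X z ->
    edist (affine_map M1 w1 c.1) (affine_map M2 w2 c.2) <=
    edist (affine_map M1 w1 y) (affine_map M2 w2 z).
Proof.
have [x0 Xx0] := X0.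
have [c cin hc] := compact_EVT_min (ex_intro _ (x0, x0) (conj Xx0 Xx0))
  (compact_setX cX cX) (continuous_subspaceT (@continuous_affine_dist M1 M2 w1 w2)).
exists c; first by move: cin; rewrite inE.
by move=> y z Xy Xz; apply: (hc (y, z)); rewrite inE.
Qed.

Lemma affine_dist_max (M1 M2 : 'M[R]_2) (w1 w2 : 'cV[R]_2) :
  exists2 c, (X `*` X) c & forall y z, X y -> X z ->
    edist (affine_map M1 w1 y) (affine_map M2 w2 z) <=
    edist (affine_map M1 w1 c.1) (affine_map M2 w2 c.2).
Proof.
have [x0 Xx0] := X0.
have [c cin hc] := compact_EVT_max (ex_intro _ (x0, x0) (conj Xx0 Xx0))
  (compact_setX cX cX) (continuous_subspaceT (@continuous_affine_dist M1 M2 w1 w2)).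
exists c; first by move: cin; rewrite inE.
by move=> y z Xy Xz; apply: (hc (y, z)); rewrite inE.
Qed.

Lemma separation_gap : exists2 dl, 0 < dl & forall i a b,
  piece i a -> X b -> ~ piece i b -> dl <= edist a b.
Proof.
pose P (ij : 'I_N * 'I_N) (x : R) := ij.1 != ij.2 -> forall y z, X y -> X z ->
  x <= edist (affine_map (A ij.1) (v ij.1) y) (affine_map (A ij.2) (v ij.2) z).
have [dl dl0 hdl] : exists2 x, 0 < x & forall ij, P ij x.
  apply: finite_common_pos.
    by move=> ij x y y0 yx hx hne a b Xa Xb; apply: (le_trans yx); apply: hx.
  move=> [i j]; have [->|ij] := eqVneq i j; first by exists 1 => //; rewrite /P /= eqxx.
  have [c [Xc1 Xc2] hc] := affine_dist_min (A i) (A j) (v i) (v j).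
  exists (edist (affine_map (A i) (v i) c.1) (affine_map (A j) (v j) c.2)); last first.
    by move=> _ y z Xy Xz; apply: hc.
  rewrite lt_neqAle edist_ge0 andbT eq_sym; apply/eqP => /edist_eq0 e.
  have : (piece i `&` piece j) (affine_map (A i) (v i) c.1).
    by split; [exists c.1 | rewrite e; exists c.2].
  by rewrite hdisj.
exists dl => // i a b [y Xy <-] Xb nb.
have [j [z Xz ez]] := hcov Xb.
have ij : i != j by apply/eqP => eij; apply: nb; rewrite eij -ez; exists z.
by rewrite -ez; exact: (hdl (i, j) ij y z Xy Xz).
Qed.

Lemma compact_bound : exists2 D, 0 < D & bnd X D.
Proof.
have [c _ hc] := affine_dist_max 1%:M 1%:M 0 0.
set D0 := edist _ _ in hc.
exists (D0 + 1); first by rewrite ltr_wpDl ?edist_ge0.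
move=> y z Xy Xz; have := hc y z Xy Xz; rewrite /affine_map !mul1mx !addr0 => h.
by apply: le_trans h _; rewrite lerDl.
Qed.

End Compactness.

Unset Implicit Arguments.

Theorem mainTheorem15 (R : realType) (N : nat) (A : 'I_N -> 'M[R]_2)
    (v : 'I_N -> 'cV[R]_2) (X : set 'cV[R]_2) :
  (2 <= N)%N ->
  (forall i, A i \in unitmx) ->
  (forall i, opnorm (A i) < 1) ->
  X !=set0 -> compact X ->
  X = \bigcup_(i in [set: 'I_N]) (affine_map (A i) (v i) @` X) ->
  (forall i j, i != j -> affine_map (A i) (v i) @` X `&` affine_map (A j) (v j) @` X = set0) ->
  (ereal_sup [set dimH (X `&` translate (line_through0 u) x)
               | x in X & u in [set u : 'cV[R]_2 | u != 0%R]] < 1%:E)%E.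
Proof.
move=> _ hAu hA1 X0 cX hX hdisj.
have hcov z : X z -> exists i, (affine_map (A i) (v i) @` X) z.
  by rewrite {1}hX => -[i _ h]; exists i.
have [dl dl0 hsep] := separation_gap X0 cX hcov hdisj.
have [D D0 hXD] := compact_bound X0 cX.
have [lam [lam0 lam1 hlam]] := common_ratio hA1.
have s0 : 0 < sexp D dl := sexp_gt0 D0 dl0.
have s1 : sexp D dl < 1 := sexp_lt1 D0 dl0.
set s' := (1 + sexp D dl) / 2.
apply: (@le_lt_trans _ _ s'%:E); last by rewrite lte_fin /s'; lra.
apply: ge_ereal_sup => _ [x Xx [u /= u0 <-]].
set Q := X `&` translate (line_through0 u) x.
have QX : Q `<=` X by move=> z [].
have QL : Q `<=` Lset x u by move=> z [].
have Q0 : Q !=set0 by exists x; split => //; apply/LsetP; exists 0; rewrite scale0r add0r.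
apply: dimH_le_null; first by rewrite /s'; lra.
apply: (hausdorff_measure_eq0 D0 (bnd_sub QX hXD) s0); first by rewrite /s'; lra.
exact: (slice_fine_covers hAu lam0 hlam D0 hXD dl0 hcov hsep lam1 u0 QX QL Q0).
Qed.
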